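(* Let $0<t\le k<n$ be integers. (i) If a Steiner system $S(t,k,n)$ exists, then for $w=k$ and every $q\ge \binom{n-1}{t-1}/\binom{w-1}{t-1}+1$ there is an $(n,w,2w-t+1)_q$ code of size $\binom{n}{t}/\binom{w}{t}$, and it attains the code--anticode bound with the anticode $A'_q(n,w,t)$, i.e. its size times $|A'_q(n,w,t)|$ equals $|J_q(n,w)|$. Moreover the supports of its codewords are exactly the blocks of the given $S(t,k,n)$. (ii) If a Steiner system $S(t,k,n)$ exists, then for $w=n-k$ and every $q\ge \binom{n}{t}/\binom{k}{t}-\binom{n-1}{t-1}/\binom{k-1}{t-1}+1$ there is an $(n,w,n-t+1)_q$ code of size $\binom{n}{t}/\binom{n-w}{t}$, which attains the code--anticode bound with the anticode $A''_q(n,w,t)$. Moreover the complements of the supports of its codewords are exactly the blocks of the given $S(t,k,n)$. (iii) If no Steiner system $S(t,k,n)$ exists, then for no $q$ does there exist an $(n,k,2k-t+1)_q$ code of size $\binom{n}{t}/\binom{k}{t}$, nor an $(n,n-k,n-t+1)_q$ code of size $\binom{n}{t}/\binom{k}{t}$.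
   Context: $\mathbb{Z}_q=\{0,\dots,q-1\}$ (an alphabet), $[n]=\{1,\dots,n\}$; $\mathrm{supp}(x)=\{i:x_i\ne0\}$, $\mathrm{wt}(x)=|\mathrm{supp}(x)|$, $d$ = Hamming distance; $J_q(n,w)$ = weight-$w$ words of $\mathbb{Z}_q^n$. An $(n,w,d)_q$ code of size $M$ is a subset $C\subseteq J_q(n,w)$ with $|C|=M\ge 2$ and $d(x,y)\ge d$ for all distinct $x,y\in C$. A Steiner system $S(t,k,n)$ ($0<t\le k<n$) is a pair $(N,B)$ with $|N|=n$ and $B$ a set of $k$-subsets of $N$ (blocks) such that every $t$-subset of $N$ is contained in exactly one block. The anticodes are $A'_q(n,w,t)=\{a\in\mathbb{Z}_q^n: \mathrm{wt}((a_1,\dots,a_t))=t,\ \mathrm{wt}((a_{t+1},\dots,a_n))=w-t\}$ and $A''_q(n,w,t)=\{a\in\mathbb{Z}_q^n: a_1=\dots=a_t=0,\ \mathrm{wt}((a_{t+1},\dots,a_n))=w\}$; they have diameters $2w-t$ and $n-t$ respectively. A code attains the code--anticode bound with anticode $A$ if $|C|\cdot|A|=|J_q(n,w)|$. *)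

From mathcomp Require Import all_boot all_order all_algebra.
Set Implicit Arguments. Unset Strict Implicit. Unset Printing Implicit Defensive.

(* Words of Z_q^n: coordinates indexed by 'I_n (position i+1 of the paper is
   index i), symbols in 'I_q = {0,...,q-1}. *)
Definition word (q n : nat) := {ffun 'I_n -> 'I_q}.

Definition supp q n (x : word q n) : {set 'I_n} := [set i | val (x i) != 0%N].
Definition wt q n (x : word q n) : nat := #|supp x|.
Definition hdist q n (x y : word q n) : nat := #|[set i | x i != y i]|.

Definition J q n w : {set word q n} := [set x | wt x == w].

Definition is_code q n w d (C : {set word q n}) : Prop :=
  C \subset J q n w /\ (2 <= #|C|)%N /\
  (forall x y, x \in C -> y \in C -> x != y -> (d <= hdist x y)%N).

Definition steiner (t k n : nat) (B : {set {set 'I_n}}) : Prop :=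
  (0 < t)%N /\ (t <= k)%N /\ (k < n)%N /\
  (forall b, b \in B -> #|b| = k) /\
  (forall T : {set 'I_n}, #|T| = t -> exists! b, b \in B /\ T \subset b).

Definition head_pos n t : {set 'I_n} := [set i : 'I_n | (i < t)%N].

Definition anticode1 q n w t : {set word q n} :=
  [set a | (#|supp a :&: head_pos n t| == t) &&
           (#|supp a :&: ~: head_pos n t| == w - t)%N].

Definition anticode2 q n w t : {set word q n} :=
  [set a | (supp a :&: head_pos n t == set0) &&
           (#|supp a :&: ~: head_pos n t| == w)].

(* Give each block b of S(t,k,n) the word supported on b whose symbol at a
   point i is one plus the rank of b among the r = C(n-1,t-1)/C(k-1,t-1) blocks
   through i; an alphabet of more than r symbols suffices.  Two such words differ
   on the whole union of their supports, and blocks meet in fewer than t points,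
   so the distance is at least 2k-t+1.  Part (ii) applies the same construction
   to the complements of the blocks, each point lying in |B| - r of them.
   Conversely, the supports (or their complements) of a code as in (iii) are
   k-sets pairwise meeting in fewer than t points, and a packing with
   C(n,t)/C(k,t) members must cover every t-set exactly once.  The anticode
   equalities reduce to C(n,t) C(n-t,k-t) = C(n,k) C(k,t). *)

From mathcomp Require Import all_boot all_order all_algebra.
From mathcomp Require Import zify.
Import GRing.Theory Num.Theory.
Set Implicit Arguments. Unset Strict Implicit.

Lemma card_words_with_supp q n (S : {set 'I_n}) :
  #|[set x : word q.+1 n | supp x == S]| = q ^ #|S|.
Proof.
pose F i := if i \in S then [pred a : 'I_q.+1 | val a != 0%N]
            else [pred a : 'I_q.+1 | val a == 0%N].
have -> : [set x : word q.+1 n | supp x == S] = [set x in family F].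
  apply/setP => x; rewrite !inE; apply/eqP/familyP => [eS i | xF].
    by rewrite /F -eS inE; case: ifP => // /negbFE.
  apply/setP => i; rewrite inE; have := xF i.
  by rewrite /F; case: ifP => _; rewrite inE => /= ->.
rewrite cardsE card_family foldrE big_map big_enum /=.
rewrite (bigID (mem S)) /= -[q ^ _]muln1 -prod_nat_const; congr (_ * _).
  apply: eq_bigr => i iS; rewrite /F iS.
  by rewrite (eq_card (B := predC1 ord0)) ?cardC1 ?card_ord // => a; rewrite !inE.
rewrite big1 // => i /negbTE iS; rewrite /F iS.
by rewrite (eq_card (B := pred1 ord0)) ?card1 // => a; rewrite !inE.
Qed.

Lemma card_words_supp_in (q n w : nat) (X : {set {set 'I_n}}) :
  {in X, forall S : {set 'I_n}, #|S| = w} ->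
  #|[set x : word q.+1 n | supp x \in X]| = #|X| * q ^ w.
Proof.
move=> cX; rewrite -sum1_card (partition_big (@supp q.+1 n) (mem X)) /=; last first.
  by move=> x; rewrite inE.
rewrite -sum_nat_const; apply: eq_bigr => S SX.
rewrite -(cX _ SX) -card_words_with_supp -sum1_card; apply: eq_bigl => x.
by rewrite !inE; case: eqP => [->|]; rewrite ?SX ?andbF.
Qed.

Lemma card_J q n w : #|J q.+1 n w| = 'C(n, w) * q ^ w.
Proof.
have -> : J q.+1 n w = [set x | supp x \in [set S : {set 'I_n} | #|S| == w]].
  by apply/setP => x; rewrite !inE.
by rewrite (@card_words_supp_in q n w) ?card_draws ?card_ord // => S; rewrite inE => /eqP.
Qed.

Lemma card_supersets (T : finType) (A : {set T}) w : #|A| <= w <= #|T| ->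
  #|[set S : {set T} | A \subset S & #|S| == w]| = 'C(#|T| - #|A|, w - #|A|).
Proof.
case/andP=> Aw wT.
have -> : [set S : {set T} | A \subset S & #|S| == w] =
    @setC T @: [set U : {set T} | U \subset ~: A & #|U| == #|T| - w].
  apply/setP => S; rewrite inE; apply/idP/imsetP => [/andP [AS /eqP cS] | [U]].
    exists (~: S); last by rewrite setCK.
    by rewrite inE -subsetC setCK AS [#|~: S|]cardsCs setCK cS /=.
  rewrite inE -subsetC => /andP [AU /eqP cU] ->; rewrite AU /=.
  by rewrite cardsCs setCK cU subKn.
rewrite card_imset ?cards_draws; last exact: setC_inj.
rewrite [#|~: A|]cardsCs setCK -bin_sub; last lia.
by congr 'C(_, _); lia.
Qed.

Lemma card_draws_mem (T : finType) (A : {set T}) i t : 0 < t -> i \in A ->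
  #|[set S : {set T} | S \subset A & (#|S| == t) && (i \in S)]| = 'C(#|A|.-1, t.-1).
Proof.
move=> t0 iA.
have iNU (U : {set T}) : U \subset A :\ i -> i \notin U.
  by move=> UA; apply/negP => /(subsetP UA); rewrite !inE eqxx.
have -> : [set S : {set T} | S \subset A & (#|S| == t) && (i \in S)] =
    [set i |: U | U in [set U : {set T} | U \subset A :\ i & #|U| == t.-1]].
  apply/setP => S; rewrite inE; apply/idP/imsetP => [/and3P [SA /eqP cS iS] | [U]].
    exists (S :\ i); last by rewrite setD1K.
    by rewrite inE setSD //= -cS (cardsD1 i S) iS.
  rewrite inE => /andP [UA /eqP cU] ->; have iU := iNU U UA.
  rewrite subUset sub1set iA (subset_trans UA (subD1set _ _)) setU11 cardsU1 iU.
  by rewrite /= andbT; apply/eqP; lia.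
rewrite card_in_imset ?cards_draws ?(cardsD1 i A) ?iA //.
move=> U V; rewrite !inE => /andP [/iNU iU _] /andP [/iNU iV _] eUV.
by rewrite -(setU1K iU) -(setU1K iV) eUV.
Qed.

Lemma double_count_subsets (T : finType) (X F : {set {set T}}) :
  \sum_(S in X) #|[set b in F | S \subset b]| =
  \sum_(b in F) #|[set S in X | S \subset b]|.
Proof.
transitivity (\sum_(S in X) \sum_(b in F | S \subset b) 1).
  by apply: eq_bigr => S _; rewrite -sum1_card; apply: eq_bigl => b; rewrite inE.
rewrite (exchange_big_dep (mem F)) /=; last by move=> S b _ /andP [].
by apply: eq_bigr => b bF; rewrite -sum1_card; apply: eq_bigl => S; rewrite !inE bF.
Qed.

Lemma exists_subset_card (T : finType) (A : {set T}) m : m <= #|A| ->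
  exists2 S : {set T}, S \subset A & #|S| = m.
Proof.
move=> mA; have : 0 < #|[set S : {set T} | S \subset A & #|S| == m]|.
  by rewrite cards_draws bin_gt0.
by case/card_gt0P => S; rewrite inE => /andP [SA /eqP cS]; exists S.
Qed.

Lemma card1_existsU (T : finType) (A : {set T}) (P : pred T) :
  #|[set x in A | P x]| = 1 <-> exists! x, x \in A /\ P x.
Proof.
split=> [/eqP/cards1P [x eA] | [x [[xA Px] xU]]].
  have : x \in [set x in A | P x] by rewrite eA set11.
  rewrite inE => /andP [xA Px]; exists x; split=> // y [yA Py].
  have : y \in [set x] by rewrite -eA inE yA.
  by rewrite in_set1 => /eqP.
apply/eqP/cards1P; exists x; apply/setP => y; rewrite !inE.
by apply/andP/eqP => [yAP | ->]; first by rewrite (xU y yAP).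
Qed.

Lemma bin_trinomial n k t : t <= k <= n ->
  'C(n, t) * 'C(n - t, k - t) = 'C(n, k) * 'C(k, t).
Proof.
case/andP=> tk kn.
have f_gt0 : 0 < t`! * (k - t)`! * (n - k)`! by rewrite !muln_gt0 !fact_gt0.
apply/eqP; rewrite -(eqn_pmul2r f_gt0); apply/eqP.
have ent : 'C(n - t, k - t) * ((k - t)`! * (n - k)`!) = (n - t)`!.
  by rewrite (_ : n - k = n - t - (k - t)); [apply: bin_fact | ]; lia.
transitivity ('C(n, t) * (t`! * ('C(n - t, k - t) * ((k - t)`! * (n - k)`!)))).
  by rewrite !mulnA; congr (_ * _); rewrite -!mulnA; congr (_ * _); rewrite mulnCA.
rewrite ent bin_fact; last lia.
rewrite -(bin_fact kn) -(bin_fact tk).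
by rewrite !mulnA; congr (_ * _); rewrite -!mulnA; congr (_ * _); rewrite mulnCA.
Qed.

Lemma ltn_bin2l k n t : 0 < t <= k -> k < n -> 'C(k, t) < 'C(n, t).
Proof.
case/andP=> t0 tk kn; apply: (@leq_trans 'C(k.+1, t)); last exact: leq_bin2l.
case: t t0 tk => // t _ tk; rewrite binS -[X in X < _]addn0 ltn_add2l bin_gt0.
exact: leq_trans tk.
Qed.

Lemma natr_eq_div (R : numFieldType) a b c : 0 < b ->
  (a%:R = c%:R / b%:R :> R)%R <-> a * b = c.
Proof.
move=> b0; have b_neq0 : (b%:R != 0 :> R)%R by rewrite pnatr_eq0 -lt0n.
split=> [e|<-]; last by rewrite natrM mulfK.
by apply/eqP; rewrite -(eqr_nat R) natrM e mulfVK.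
Qed.

Lemma cardsU_ge_cardsI_lt (T : finType) (A B : {set T}) w t :
  #|A| = w -> #|B| = w -> t <= w ->
  (2 * w - t + 1 <= #|A :|: B|) = (#|A :&: B| < t).
Proof.
move=> cA cB tw; have := subset_leq_card (subsetIl A B).
by rewrite cardsU cA cB => AB_le; apply/idP/idP; lia.
Qed.

Lemma cardsC_ord n (A : {set 'I_n}) : #|~: A| = n - #|A|.
Proof. by have := cardsC A; rewrite card_ord; lia. Qed.

Lemma cardsU_ge_cardsCI_lt n (A B : {set 'I_n}) t : t <= n ->
  (n - t + 1 <= #|A :|: B|) = (#|~: A :&: ~: B| < t).
Proof.
by move=> tn; have := cardsC (A :|: B); rewrite card_ord setCU => cU; apply/idP/idP; lia.
Qed.

Lemma hdist_le_cardsU q n (x y : word q n) : hdist x y <= #|supp x :|: supp y|.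
Proof.
apply: subset_leq_card; apply/subsetP => i; rewrite !inE.
apply: contraR; rewrite negb_or !negbK => /andP [/eqP x0 /eqP y0].
by apply/eqP/val_inj; rewrite x0 y0.
Qed.

Lemma code_dist_le_cardsU q n w d (C : {set word q n}) : is_code w d C ->
  {in C &, forall x y, x != y -> d <= #|supp x :|: supp y|}.
Proof.
by case=> _ [_ dC] x y xC yC xy; apply: leq_trans (dC x y xC yC xy) (hdist_le_cardsU x y).
Qed.

Lemma superset_cardsE (T : finType) (A S : {set T}) w : #|A| <= w ->
  (#|S :&: A| == #|A|) && (#|S :&: ~: A| == w - #|A|) = (A \subset S) && (#|S| == w).
Proof.
move=> Aw; rewrite -setDE; have [_ ->] := subset_leqif_cards (subsetIr S A).
case: (boolP (A \subset S)) => AS.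
  rewrite (setIidPr AS) eqxx /=; have := cardsID A S; rewrite (setIidPr AS).
  by move=> cS; apply/eqP/eqP; lia.
suff /negbTE -> : S :&: A != A by [].
by apply: contra AS => /eqP <-; exact: subsetIl.
Qed.

Lemma card_head_pos n t : t <= n -> #|head_pos n t| = t.
Proof.
move=> tn; have -> : head_pos n t = [set widen_ord tn i | i in 'I_t].
  apply/setP => i; rewrite inE.
  apply/idP/imsetP => [it | [j _ ->]]; last exact: ltn_ord j.
  by exists (Ordinal it) => //; apply/val_inj.
by rewrite card_imset ?card_ord // => i j /(congr1 val) /= /val_inj.
Qed.

Lemma card_anticode1 (q n w t : nat) : t <= w <= n ->
  #|anticode1 q.+1 n w t| = 'C(n - t, w - t) * q ^ w.
Proof.
case/andP=> tw wn; have cH := card_head_pos (leq_trans tw wn).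
have -> : anticode1 q.+1 n w t =
    [set x | supp x \in [set S : {set 'I_n} | head_pos n t \subset S & #|S| == w]].
  apply/setP => x; rewrite !inE.
  by have := @superset_cardsE _ (head_pos n t) (supp x) w; rewrite cH => /(_ tw).
rewrite (@card_words_supp_in q n w); last by move=> S; rewrite inE => /andP [_ /eqP].
by rewrite card_supersets card_ord cH // tw.
Qed.

Lemma card_anticode2 (q n w t : nat) : t <= n ->
  #|anticode2 q.+1 n w t| = 'C(n - t, w) * q ^ w.
Proof.
move=> tn; have cH := card_head_pos tn.
have -> : anticode2 q.+1 n w t =
    [set x | supp x \in [set S : {set 'I_n} | S \subset ~: head_pos n t & #|S| == w]].
  apply/setP => x; rewrite !inE setI_eq0 disjoints_subset.
  by case: (boolP (supp x \subset _)) => // /setIidPl ->.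
rewrite (@card_words_supp_in q n w); last by move=> S; rewrite inE => /andP [_ /eqP].
by rewrite cards_draws cardsC_ord cH.
Qed.

Lemma card_compl_family_mem (T : finType) (F : {set {set T}}) i :
  #|[set c in @setC T @: F | i \in c]| = #|F| - #|[set b in F | i \in b]|.
Proof.
have -> : [set c in @setC T @: F | i \in c] =
    @setC T @: (F :\: [set b : {set T} | i \in b]).
  apply/setP => c; rewrite inE; apply/andP/imsetP => [[/imsetP [b bF ->] ib] | [b]].
    by exists b; rewrite // !inE -in_setC ib bF.
  by rewrite !inE => /andP [nib bF] ->; rewrite imset_f // inE.
rewrite card_imset; last exact: setC_inj.
have -> : [set b in F | i \in b] = F :&: [set b : {set T} | i \in b].
  by apply/setP => b; rewrite !inE.
by rewrite cardsD.
Qed.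

Lemma code_card_supp q n w d (C : {set word q n}) x : is_code w d C -> x \in C ->
  #|supp x| = w.
Proof. by case=> /subsetP CJ _ /CJ; rewrite inE => /eqP. Qed.

Lemma code_supp_inj q n w d (C : {set word q n}) : is_code w d C -> w < d ->
  {in C &, injective (@supp q n)}.
Proof.
move=> Ccode wd x y xC yC e; apply/eqP/negPn/negP => xy.
have := code_dist_le_cardsU Ccode xC yC xy.
by rewrite e setUid (code_card_supp Ccode yC) leqNgt wd.
Qed.

Section FamilyCode.
Variables (q n : nat) (F : {set {set 'I_n}}).
Hypothesis F_deg : forall i, #|[set b in F | i \in b]| <= q.

(* The members of F through a point i get distinct nonzero symbols at i:
   one plus their rank in an enumeration of those members. *)
Definition family_word (b : {set 'I_n}) : word q.+1 n :=
  [ffun i => if i \in b then inord (index b (enum [set c in F | i \in c])).+1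
             else ord0].

Lemma val_family_word b i : b \in F -> i \in b ->
  val (family_word b i) = (index b (enum [set c in F | i \in c])).+1.
Proof.
move=> bF ib; rewrite ffunE ib /= inordK // ltnS; apply: leq_trans (F_deg i).
by rewrite cardE index_mem mem_enum inE bF ib.
Qed.

Lemma supp_family_word b : b \in F -> supp (family_word b) = b.
Proof.
move=> bF; apply/setP => i; rewrite inE.
case: (boolP (i \in b)) => [ib | /negbTE nib]; first by rewrite val_family_word.
by rewrite /family_word ffunE nib.
Qed.

Lemma family_word_neq b1 b2 i : b1 \in F -> b2 \in F -> b1 != b2 ->
  i \in b1 :|: b2 -> family_word b1 i != family_word b2 i.
Proof.
move=> b1F b2F b12 /setUP i_b12; rewrite -val_eqE.
case: (boolP (i \in b1)) => ib1; case: (boolP (i \in b2)) => ib2.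
- rewrite !val_family_word // eqSS; apply: contra b12 => /eqP idx12.
  have b_enum b : b \in F -> i \in b -> b \in enum [set c in F | i \in c].
    by move=> bF ib; rewrite mem_enum inE bF ib.
  by rewrite -(nth_index b1 (b_enum _ b1F ib1)) idx12 nth_index ?b_enum.
- by rewrite (val_family_word b1F ib1) /family_word ffunE (negbTE ib2).
- by rewrite (val_family_word b2F ib2) /family_word ffunE (negbTE ib1).
- by case: i_b12 => ib; [rewrite ib in ib1 | rewrite ib in ib2].
Qed.

Lemma code_of_family (w d : nat) : 2 <= #|F| ->
  {in F, forall b : {set 'I_n}, #|b| = w} ->
  {in F &, forall b1 b2 : {set 'I_n}, b1 != b2 -> d <= #|b1 :|: b2|} ->
  exists C : {set word q.+1 n},
    [/\ is_code w d C, #|C| = #|F| & [set supp x | x in C] = F].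
Proof.
move=> F_gt1 F_card F_dist.
have fw_inj : {in F &, injective family_word}.
  by move=> b1 b2 b1F b2F e12; rewrite -(supp_family_word b1F) e12 supp_family_word.
exists (family_word @: F); split; first (split; last split).
- apply/subsetP => _ /imsetP [b bF ->].
  by rewrite inE /wt supp_family_word // F_card.
- by rewrite card_in_imset.
- move=> _ _ /imsetP [b1 b1F ->] /imsetP [b2 b2F ->] x12.
  have b12 : b1 != b2 by apply: contraNneq x12 => ->.
  apply: leq_trans (F_dist _ _ b1F b2F b12) _; apply: subset_leq_card.
  by apply/subsetP => i i_b12; rewrite inE family_word_neq.
- by rewrite card_in_imset.
rewrite -imset_comp (eq_in_imset (g := id)) ?imset_id // => b bF /=.
exact: supp_family_word.
Qed.

End FamilyCode.

Section Steiner.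
Variables (t k n : nat) (B : {set {set 'I_n}}).
Hypothesis B_steiner : steiner t k B.

Lemma steiner_card_block (b : {set 'I_n}) : b \in B -> #|b| = k.
Proof. by case: B_steiner => _ [_ [_ [cB _]]]; apply: cB. Qed.

Lemma steiner_card_blocks_sub (T : {set 'I_n}) :
  #|T| = t -> #|[set b in B | T \subset b]| = 1.
Proof. by case: B_steiner => _ [_ [_ [_ uB]]] cT; apply/card1_existsU/uB. Qed.

Lemma steiner_cardsI_lt (b1 b2 : {set 'I_n}) : b1 \in B -> b2 \in B -> b1 != b2 ->
  #|b1 :&: b2| < t.
Proof.
move=> b1B b2B b12; rewrite ltnNge; apply/negP => /exists_subset_card [T Tb12 cT].
have := steiner_card_blocks_sub cT; apply/eqP; rewrite eqn_leq negb_and; apply/orP; left.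
rewrite -ltnNge (cardsD1 b1) (cardsD1 b2) !inE b1B b2B eq_sym b12.
by rewrite !(subset_trans Tb12) ?subsetIl ?subsetIr.
Qed.

Lemma steiner_card_blocks : #|B| * 'C(k, t) = 'C(n, t).
Proof.
have := double_count_subsets [set S : {set 'I_n} | #|S| == t] B.
rewrite (eq_bigr (fun _ => 1)); last first.
  by move=> S; rewrite inE => /eqP/steiner_card_blocks_sub.
rewrite sum_nat_const muln1 card_draws card_ord => ->.
rewrite -sum_nat_const; apply: eq_bigr => b bB.
rewrite -(steiner_card_block bB) -cards_draws.
by apply: eq_card => S; rewrite !inE andbC.
Qed.

Lemma steiner_card_blocks_mem i :
  #|[set b in B | i \in b]| * 'C(k.-1, t.-1) = 'C(n.-1, t.-1).
Proof.
have t_gt0 : 0 < t by case: B_steiner.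
pose X := [set S : {set 'I_n} | S \subset setT & (#|S| == t) && (i \in S)].
have := double_count_subsets X B.
rewrite (eq_bigr (fun _ => 1)); last first.
  by move=> S; rewrite inE => /and3P [_ /eqP/steiner_card_blocks_sub].
rewrite sum_nat_const muln1 card_draws_mem ?in_setT // cardsT card_ord => ->.
rewrite (bigID (fun b : {set 'I_n} => i \in b)) /= [Z in _ + Z]big1 ?addn0; last first.
  move=> b /andP [_ /negP nib]; apply/eqP; rewrite cards_eq0; apply/eqP/setP => S.
  by rewrite !inE; apply/negP => /andP [/and3P [_ _ iS] Sb]; apply/nib/(subsetP Sb).
rewrite -sum_nat_const; apply: congr_big => // b; first by rewrite !inE.
rewrite inE => /andP [bB ib]; rewrite -(steiner_card_block bB) -(card_draws_mem t_gt0 ib).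
by apply: eq_card => S; rewrite !inE subsetT andbC.
Qed.

Lemma steiner_card_blocks_gt1 : 1 < #|B|.
Proof.
case: B_steiner => t_gt0 [tk [kn _]].
have := ltn_bin2l (introT andP (conj t_gt0 tk)) kn.
by rewrite -steiner_card_blocks -[X in X < _]mul1n ltn_pmul2r // bin_gt0.
Qed.

Lemma steiner_card_blocks_bin : #|B| * 'C(n - t, k - t) = 'C(n, k).
Proof.
case: B_steiner => _ [tk [kn _]]; apply/eqP.
rewrite -(eqn_pmul2r (_ : 0 < 'C(k, t))) ?bin_gt0 //.
by rewrite mulnAC steiner_card_blocks bin_trinomial // tk ltnW.
Qed.

Lemma steiner_card_blocks_rat :
  (#|B|%:R = 'C(n, t)%:R / 'C(k, t)%:R :> rat)%R.
Proof.
case: B_steiner => _ [tk _]; apply/natr_eq_div; last exact: steiner_card_blocks.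
by rewrite bin_gt0.
Qed.

Lemma steiner_card_blocks_mem_rat i :
  (#|[set b in B | i \in b]|%:R = 'C(n.-1, t.-1)%:R / 'C(k.-1, t.-1)%:R :> rat)%R.
Proof.
case: B_steiner => _ [tk _]; apply/natr_eq_div; last exact: steiner_card_blocks_mem.
by rewrite bin_gt0; lia.
Qed.

Lemma steiner_supp_code q :
  ('C(n.-1, t.-1)%:R / 'C(k.-1, t.-1)%:R + 1 <= q%:R :> rat)%R ->
  exists C : {set word q n},
    [/\ is_code k (2 * k - t + 1) C, #|C| = #|B|,
        #|C| * #|anticode1 q n k t| = #|J q n k| & [set supp x | x in C] = B].
Proof.
case: B_steiner => t_gt0 [tk [kn _]] q_ge.
have deg i : #|[set b in B | i \in b]| < q.
  by rewrite -addn1 -(ler_nat rat) natrD steiner_card_blocks_mem_rat.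
case: q {q_ge} deg => [|q] deg.
  by have := deg (Ordinal (leq_ltn_trans (leq0n k) kn)).
have [|C [Ccode cC sC]] := code_of_family (w := k) (d := 2 * k - t + 1) deg
  steiner_card_blocks_gt1 steiner_card_block.
  move=> b1 b2 b1B b2B b12.
  rewrite (cardsU_ge_cardsI_lt (steiner_card_block b1B) (steiner_card_block b2B) tk).
  exact: steiner_cardsI_lt.
exists C; split=> //.
rewrite card_anticode1 ?card_J ?mulnA ?cC ?steiner_card_blocks_bin //.
by rewrite tk ltnW.
Qed.

Lemma steiner_compl_supp_code q :
  ('C(n, t)%:R / 'C(k, t)%:R - 'C(n.-1, t.-1)%:R / 'C(k.-1, t.-1)%:R + 1
     <= q%:R :> rat)%R ->
  exists C : {set word q n},
    [/\ is_code (n - k) (n - t + 1) C, #|C| = #|B|,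
        #|C| * #|anticode2 q n (n - k) t| = #|J q n (n - k)|
      & [set ~: supp x | x in C] = B].
Proof.
case: B_steiner => t_gt0 [tk [kn _]] q_ge.
pose F := [set ~: b | b in B].
have cF : #|F| = #|B| by rewrite card_imset //; exact: setC_inj.
have deg i : #|[set c in F | i \in c]| < q.
  rewrite card_compl_family_mem -addn1 -(ler_nat rat) natrD natrB; last first.
    by apply: subset_leq_card; apply/subsetP => b; rewrite inE => /andP [].
  by rewrite steiner_card_blocks_rat steiner_card_blocks_mem_rat.
case: q {q_ge} deg => [|q] deg.
  by have := deg (Ordinal (leq_ltn_trans (leq0n k) kn)).
have [|||C [Ccode cC sC]] := code_of_family (w := n - k) (d := n - t + 1) deg.
- by rewrite cF steiner_card_blocks_gt1.
- by move=> _ /imsetP [b bB ->]; rewrite cardsC_ord steiner_card_block.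
- move=> _ _ /imsetP [b1 b1B ->] /imsetP [b2 b2B ->] b12.
  rewrite cardsU_ge_cardsCI_lt ?(leq_trans tk (ltnW kn)) // !setCK.
  by apply: steiner_cardsI_lt => //; apply: contraNneq b12 => ->.
exists C; split=> //; first by rewrite cC.
  rewrite card_anticode2 ?card_J ?(leq_trans tk (ltnW kn)) // mulnA cC cF.
  have -> : 'C(n - t, n - k) = 'C(n - t, k - t).
    by rewrite -bin_sub; [congr 'C(_, _) | ]; lia.
  by rewrite steiner_card_blocks_bin bin_sub // ltnW.
have -> : [set ~: supp x | x in C] = @setC _ @: (@supp _ _ @: C) by rewrite -imset_comp.
by rewrite sC -imset_comp (eq_imset (g := id)) ?imset_id // => b /=; rewrite setCK.
Qed.

End Steiner.

(* Every t-set lies in at most one member, and double counting shows that the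
   members cover C(n,t) t-sets in total, i.e. all of them. *)
Lemma steiner_of_packing t k n (F : {set {set 'I_n}}) : 0 < t -> t <= k -> k < n ->
  {in F, forall b : {set 'I_n}, #|b| = k} ->
  {in F &, forall b1 b2 : {set 'I_n}, b1 != b2 -> #|b1 :&: b2| < t} ->
  #|F| * 'C(k, t) = 'C(n, t) -> steiner t k F.
Proof.
move=> t_gt0 tk kn F_card F_meet F_count; do 4!split=> //.
pose X := [set S : {set 'I_n} | #|S| == t].
have cover_le1 S : S \in X -> #|[set b in F | S \subset b]| <= 1.
  rewrite inE => /eqP cS; apply/card_le1_eqP => b1 b2; rewrite !inE.
  case/andP=> b1F Sb1 /andP [b2F Sb2]; apply/eqP/negPn/negP => b12.
  have := F_meet _ _ b2F b1F b12; rewrite ltnNge -cS.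
  by rewrite subset_leq_card // subsetI Sb1 Sb2.
have cover_sum : \sum_(S in X) #|[set b in F | S \subset b]| = \sum_(S in X) 1.
  rewrite double_count_subsets sum_nat_const muln1 card_draws card_ord -F_count.
  rewrite -sum_nat_const; apply: eq_bigr => b bF; rewrite -(F_card b bF) -cards_draws.
  by apply: eq_card => S; rewrite !inE andbC.
have [_] := leqif_sum (fun S SX => leqif_eq (cover_le1 S SX)).
rewrite cover_sum eqxx => /esym/forall_inP cover1 T cT.
by apply/card1_existsU/eqP/cover1; rewrite inE cT.
Qed.

Lemma steiner_of_supp_code t k n q (C : {set word q n}) : 0 < t -> t <= k -> k < n ->
  is_code k (2 * k - t + 1) C -> #|C| * 'C(k, t) = 'C(n, t) ->
  steiner t k [set supp x | x in C].
Proof.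
move=> t_gt0 tk kn Ccode cC.
have supp_inj : {in C &, injective (@supp q n)}.
  by apply: (code_supp_inj Ccode); lia.
apply: steiner_of_packing => //; last by rewrite card_in_imset.
- by move=> _ /imsetP [x xC ->]; exact: code_card_supp Ccode xC.
move=> _ _ /imsetP [x xC ->] /imsetP [y yC ->] sxy.
rewrite -(cardsU_ge_cardsI_lt (code_card_supp Ccode xC) (code_card_supp Ccode yC) tk).
by apply: (code_dist_le_cardsU Ccode) => //; apply: contraNneq sxy => ->.
Qed.

Lemma steiner_of_compl_supp_code t k n q (C : {set word q n}) :
  0 < t -> t <= k -> k < n ->
  is_code (n - k) (n - t + 1) C -> #|C| * 'C(k, t) = 'C(n, t) ->
  steiner t k [set ~: supp x | x in C].
Proof.
move=> t_gt0 tk kn Ccode cC.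
have supp_inj : {in C &, injective (@supp q n)}.
  by apply: (code_supp_inj Ccode); lia.
apply: steiner_of_packing => //.
- by move=> _ /imsetP [x xC ->]; rewrite cardsC_ord (code_card_supp Ccode xC); lia.
- move=> _ _ /imsetP [x xC ->] /imsetP [y yC ->] sxy.
  rewrite -cardsU_ge_cardsCI_lt; last lia.
  by apply: (code_dist_le_cardsU Ccode) => //; apply: contraNneq sxy => ->.
by rewrite card_in_imset // => x y xC yC /setC_inj; exact: supp_inj.
Qed.

Unset Implicit Arguments.
Set Strict Implicit.

Theorem mainTheorem6 (t k n : nat) (Ht : (0 < t)%N) (Htk : (t <= k)%N) (Hkn : (k < n)%N) :
  (* (i) *)
  (forall B : {set {set 'I_n}}, steiner t k B ->
   let w := k in
   forall q : nat,
     ((('C(n.-1, t.-1)%:R / 'C(w.-1, t.-1)%:R + 1 : rat) <= q%:R))%R ->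
     exists C : {set word q n},
       [/\ is_code w (2 * w - t + 1) C,
           (#|C|%:R = ('C(n, t)%:R / 'C(w, t)%:R : rat))%R,
           (#|C| * #|anticode1 q n w t| = #|J q n w|)%N
         & [set supp x | x in C] = B]) /\
  (* (ii) *)
  (forall B : {set {set 'I_n}}, steiner t k B ->
   let w := (n - k)%N in
   forall q : nat,
     ((('C(n, t)%:R / 'C(k, t)%:R - 'C(n.-1, t.-1)%:R / 'C(k.-1, t.-1)%:R + 1 : rat)
        <= q%:R))%R ->
     exists C : {set word q n},
       [/\ is_code w (n - t + 1) C,
           (#|C|%:R = ('C(n, t)%:R / 'C(n - w, t)%:R : rat))%R,
           (#|C| * #|anticode2 q n w t| = #|J q n w|)%N
         & [set ~: supp x | x in C] = B]) /\
  (* (iii) *)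
  ((~ exists B : {set {set 'I_n}}, steiner t k B) ->
   forall q : nat,
     (~ exists C : {set word q n},
          is_code k (2 * k - t + 1) C /\
          (#|C|%:R = ('C(n, t)%:R / 'C(k, t)%:R : rat))%R) /\
     (~ exists C : {set word q n},
          is_code (n - k) (n - t + 1) C /\
          (#|C|%:R = ('C(n, t)%:R / 'C(k, t)%:R : rat))%R)).
Proof.
have Ckt : (0 < 'C(k, t))%N by rewrite bin_gt0.
split; [|split].
- move=> B B_steiner w q q_ge.
  have [C [Ccode cC CJ sC]] := steiner_supp_code B_steiner q_ge.
  by exists C; split=> //; rewrite cC; exact: steiner_card_blocks_rat.
- move=> B B_steiner w q q_ge.
  have [C [Ccode cC CJ sC]] := steiner_compl_supp_code B_steiner q_ge.
  exists C; split=> //; rewrite cC subKn ?(ltnW Hkn) //.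
  exact: steiner_card_blocks_rat.
move=> no_steiner q; split=> -[C [Ccode /(natr_eq_div _ _ _ Ckt) cC]]; apply: no_steiner.
  by eexists; exact: steiner_of_supp_code Ccode cC.
by eexists; exact: steiner_of_compl_supp_code Ccode cC.
Qed.
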